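(* Let $U=u_1\cdots u_n$ be a finite word and $\lambda\in\Lambda(U)$. Then for every letter $a\ne u_{n-\lambda+1}$, the word $u_{n-\lambda+2}^{n}\,a$ (of length $\lambda$) is not a factor of $U$.
   Context: $u_i^j=u_i\cdots u_j$ (empty if $j<i$), and $\Lambda(U)=\{1\le k<n:\ u_i=u_{i+k}\text{ for all }1\le i\le n-k\}$. *)

From mathcomp Require Import all_boot.
Set Implicit Arguments. Unset Strict Implicit. Unset Printing Implicit Defensive.

(* Words are sequences over an eqType alphabet T, indexed from 0 in Rocq:
   the paper's letter u_i (1 <= i <= n) is [nth x0 U (i-1)]. *)

(* k \in Lambda(U):  1 <= k < n  and  u_i = u_{i+k} for all 1 <= i <= n-k.
   The default letter of nth is irrelevant since all indices are in range. *)
Definition Lambda (T : eqType) (U : seq T) (k : nat) : Prop :=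
  (1 <= k < size U) /\
  (forall (x0 : T) (i : nat), i + k < size U -> nth x0 U i = nth x0 U (i + k)).

Definition factor (T : eqType) (V U : seq T) : bool := infix V U.

(* If lam is a period of U, sliding a window of length lam one
   step to the right removes a letter and appends the letter lam positions
   later, which is the same letter.  Hence every factor of length lam is a
   permutation of the last one, u_{n-lam+1} u_{n-lam+2} ... u_n, and
   u_{n-lam+2}^n a can only be such a permutation when a = u_{n-lam+1}. *)
From mathcomp Require Import all_boot zify.

Set Implicit Arguments.
Unset Strict Implicit.
Unset Printing Implicit Defensive.

Section PeriodicWindows.

Variables (T : eqType) (x0 : T) (U : seq T) (k : nat).
Hypothesis U_periodic :
  forall i, i + k < size U -> nth x0 U i = nth x0 U (i + k).

Lemma perm_window_next p :
  p + k < size U -> perm_eq (take k (drop p U)) (take k (drop p.+1 U)).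
Proof.
move=> lt_pk; have lt_p : p < size U by lia.
case: k U_periodic lt_pk => [|l] periodic lt_pk; first by rewrite !take0.
have lt_l : l < size (drop p.+1 U) by rewrite size_drop; lia.
rewrite (drop_nth x0 lt_p) [take _ (_ :: _)]/= (take_nth x0 lt_l) nth_drop.
by rewrite periodic // -perm_rcons addSn -addnS.
Qed.

Lemma perm_window_last p :
  p + k <= size U -> perm_eq (take k (drop p U)) (drop (size U - k) U).
Proof.
move: {2}(size U - k - p) (erefl (size U - k - p)) => d.
elim: d p => [|d IHd] p def_d le_pk.
  have -> : p = size U - k by lia.
  by rewrite take_oversize // size_drop; lia.
have lt_pk : p + k < size U by lia.
apply: perm_trans (perm_window_next lt_pk) (IHd p.+1 _ _); lia.
Qed.

Lemma perm_infix_last V :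
  infix V U -> size V = k -> perm_eq V (drop (size U - k) U).
Proof.
move=> /infixP [X [Y def_U]] size_V.
have -> : V = take k (drop (size X) U).
  by rewrite def_U drop_size_cat // -size_V take_size_cat.
by apply: perm_window_last; rewrite def_U !size_cat; lia.
Qed.

End PeriodicWindows.

Lemma perm_rcons_cons_eq (T : eqType) (a b : T) (s : seq T) :
  perm_eq (rcons s a) (b :: s) -> a = b.
Proof.
rewrite perm_rcons => /permP/(_ (pred1 a)) /=.
by rewrite eqxx; case: eqP => // _; lia.
Qed.

Theorem lemma5p3 (T : eqType) (U : seq T) (lam : nat) (a : T) :
  Lambda U lam ->
  a != nth a U (size U - lam) ->
  ~~ factor (drop (size U - lam + 1) U ++ [:: a]) U.
Proof.
move=> [/andP [lam_gt0 lam_lt] U_periodic] a_neq; apply/negP => V_infix.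
have lt_last : size U - lam < size U by lia.
have size_V : size (drop (size U - lam + 1) U ++ [:: a]) = lam.
  by rewrite size_cat size_drop /=; lia.
have := perm_infix_last (U_periodic a) V_infix size_V.
rewrite (drop_nth a lt_last) cats1 addn1 => /perm_rcons_cons_eq a_eq.
by rewrite -a_eq eqxx in a_neq.
Qed.
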